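(* Let $G_1,G_2$ be ordered cores. If there is an order-preserving homomorphism from $G_1$ to $G_2$ and an order-preserving homomorphism from $G_2$ to $G_1$, then there is an order-preserving isomorphism between $G_1$ and $G_2$.
   Context: All graphs are undirected with vertex sets that are subsets of $\mathbb{N}$ (so linearly ordered); subgraphs inherit the vertex labels. An order-preserving homomorphism from $G$ to $G'$ is a map $f:V(G)\to V(G')$ with $f(i)\le f(j)$ whenever $i\le j$ and $\{f(i),f(j)\}\in E(G')$ for every $\{i,j\}\in E(G)$. An order-preserving isomorphism is an order-preserving homomorphism that is a graph isomorphism. The ordered core of $G$ is a subgraph of $G$ with the smallest number of vertices among subgraphs to which $G$ has an order-preserving homomorphism; $G$ is an ordered core if it is the ordered core of itself (i.e. there is no order-preserving homomorphism from $G$ to a subgraph of $G$ with fewer vertices). *)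

From HB Require Import structures.
From mathcomp Require Import all_boot.
From mathcomp Require Import finmap.
Set Implicit Arguments. Unset Strict Implicit. Unset Printing Implicit Defensive.
Local Open Scope fset_scope.

Record graph := Graph { V : {fset nat}; E : rel nat }.

Definition is_graph (G : graph) : Prop :=
  [/\ (forall x y, E G x y -> E G y x),
      (forall x, ~~ E G x x) &
      (forall x y, E G x y -> (x \in V G) && (y \in V G))].

Definition subgraph (H G : graph) : Prop :=
  is_graph H /\ V H `<=` V G /\ (forall x y, E H x y -> E G x y).

Definition op_hom (f : nat -> nat) (G G' : graph) : Prop :=
  [/\ (forall i, i \in V G -> f i \in V G'),
      (forall i j, i \in V G -> j \in V G -> i <= j -> f i <= f j) &
      (forall i j, E G i j -> E G' (f i) (f j))].

Definition op_iso (f : nat -> nat) (G G' : graph) : Prop :=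
  [/\ op_hom f G G',
      {in V G &, injective f},
      (forall y, y \in V G' -> exists2 x, x \in V G & f x = y) &
      (forall i j, i \in V G -> j \in V G -> E G' (f i) (f j) -> E G i j)].

Definition ordered_core (G : graph) : Prop :=
  is_graph G /\
  ~ (exists (H : graph) (f : nat -> nat),
        subgraph H G /\ #|` V H| < #|` V G| /\ op_hom f G H).

From mathcomp Require Import all_boot.
From mathcomp Require Import finmap.
Local Open Scope fset_scope.
Set Implicit Arguments.

(* An order-preserving endomorphism of an ordered core is injective, since
   otherwise it maps the core onto the strictly smaller subgraph induced by
   its image.  An injective monotone self-map [h] of a finite set [S] of
   naturals is the identity: it maps the elements of [S] below [x] injectively
   to those below [h x], so [h x < x] is impossible, and dually [h x > x].
   Hence [g \o f] and [f \o g] fix the vertices of [G1] and [G2], and [f] is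
   an isomorphism with inverse [g]. *)

Section MonotoneInjectiveSelfMap.

Variables (S : {fset nat}) (h : nat -> nat).
Hypotheses (hS : {in S, forall x, h x \in S}) (h_inj : {in S &, injective h}).

Lemma homo_fixed_of_rel (R : rel nat) x :
  reflexive R -> transitive R -> antisymmetric R ->
  {in S &, {homo h : a b / R a b}} -> x \in S -> R (h x) x -> h x = x.
Proof.
move=> R_refl R_trans R_anti h_mono xS hxRx.
pose below y := [fset z in S | R z y].
have sub_below : below (h x) `<=` below x.
  apply/fsubsetP => z; rewrite !inE => /andP[-> zRhx] /=.
  exact: R_trans zRhx hxRx.
have card_below : (#|` below x| <= #|` below (h x)|)%N.
  have inj_below : {in below x &, injective h}.
    by move=> a b; rewrite !inE => /andP[aS _] /andP[bS _]; apply: h_inj.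
  move/card_in_imfsetP/eqP: inj_below <-.
  apply: fsubset_leq_card; apply/fsubsetP => _ /imfsetP[z /= + ->].
  by rewrite !inE => /andP[zS zRx]; rewrite hS //=; apply: h_mono.
have /eqP eq_below : below (h x) == below x by rewrite eqEfcard sub_below.
have : x \in below (h x) by rewrite eq_below !inE xS R_refl.
by rewrite !inE xS => xRhx; apply: R_anti; rewrite hxRx xRhx.
Qed.

Lemma homo_leq_in_fixed :
  {in S &, {homo h : a b / (a <= b)%N}} -> {in S, forall x, h x = x}.
Proof.
move=> h_mono x xS; have [hx_le_x | /ltnW x_le_hx] := leqP (h x) x.
  exact: homo_fixed_of_rel leqnn (@leq_trans) (@anti_leq) h_mono xS hx_le_x.
have geq_trans : transitive geq by move=> a b c /= ba cb; apply: leq_trans cb ba.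
apply: (homo_fixed_of_rel (R := geq)) geq_trans _ _ xS x_le_hx.
- exact: leqnn.
- by move=> a b /andP[ba ab]; apply/anti_leq/andP.
- by move=> a b aS bS /= ba; apply: h_mono.
Qed.

End MonotoneInjectiveSelfMap.

Definition induced (G : graph) (I : {fset nat}) : graph :=
  Graph I [rel a b | [&& a \in I, b \in I & E G a b]].

Lemma induced_subgraph (G : graph) (I : {fset nat}) :
  is_graph G -> I `<=` V G -> subgraph (induced G I) G.
Proof.
move=> [G_sym G_irr _] sub_I; split; last by split=> // x y /and3P[].
split=> /=.
- by move=> x y /and3P[-> -> /G_sym].
- by move=> x; rewrite (negbTE (G_irr x)) !andbF.
- by move=> x y /and3P[-> ->].
Qed.

Lemma op_hom_image (G : graph) (h : nat -> nat) :
  is_graph G -> op_hom h G G -> op_hom h G (induced G (h @` V G)).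
Proof.
move=> [_ _ G_vert] [_ h_mono h_edge]; split=> //=.
- by move=> i iG; apply: in_imfset.
- by move=> i j ij; have /andP[iG jG] := G_vert _ _ ij; rewrite !in_imfset ?h_edge.
Qed.

Lemma ordered_core_endo_inj (G : graph) (h : nat -> nat) :
  ordered_core G -> op_hom h G G -> {in V G &, injective h}.
Proof.
move=> [G_graph G_core] h_hom; apply/card_in_imfsetP.
rewrite eqn_leq leq_imfset_card /= leqNgt; apply/negP => card_lt; apply: G_core.
have [hG _ _] := h_hom.
have sub_img : h @` V G `<=` V G.
  by apply/fsubsetP => _ /imfsetP[x /= xG ->]; apply: hG.
exists (induced G (h @` V G)), h.
split; first exact: induced_subgraph G_graph sub_img.
by split; [exact: card_lt | exact: op_hom_image].
Qed.

Lemma op_hom_comp (f g : nat -> nat) (G1 G2 G3 : graph) :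
  op_hom f G1 G2 -> op_hom g G2 G3 -> op_hom (g \o f) G1 G3.
Proof.
move=> [f_vert f_mono f_edge] [g_vert g_mono g_edge]; split=> /=.
- by move=> i iG; apply/g_vert/f_vert.
- by move=> i j iG jG ij; apply: g_mono; [apply: f_vert..| apply: f_mono].
- by move=> i j ij; apply/g_edge/f_edge.
Qed.

Lemma ordered_core_endo_id (G : graph) (h : nat -> nat) :
  ordered_core G -> op_hom h G G -> {in V G, forall x, h x = x}.
Proof.
move=> G_core h_hom; have [hG h_mono _] := h_hom.
exact: homo_leq_in_fixed hG (ordered_core_endo_inj G_core h_hom) h_mono.
Qed.

Lemma op_iso_of_inverse (f g : nat -> nat) (G1 G2 : graph) :
  op_hom f G1 G2 -> op_hom g G2 G1 ->
  {in V G1, cancel f g} -> {in V G2, cancel g f} -> op_iso f G1 G2.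
Proof.
move=> f_hom [g_vert _ g_edge] fK gK; split=> //.
- exact: can_in_inj fK.
- by move=> y yG2; exists (g y); [apply: g_vert | apply: gK].
- by move=> i j iG jG /g_edge; rewrite !fK.
Qed.

Theorem proposition4p3 (G1 G2 : graph) :
  ordered_core G1 -> ordered_core G2 ->
  (exists f, op_hom f G1 G2) -> (exists g, op_hom g G2 G1) ->
  exists h, op_iso h G1 G2.
Proof.
move=> G1_core G2_core [f f_hom] [g g_hom]; exists f.
have fK := ordered_core_endo_id G1_core (op_hom_comp f_hom g_hom).
have gK := ordered_core_endo_id G2_core (op_hom_comp g_hom f_hom).
exact: op_iso_of_inverse f_hom g_hom fK gK.
Qed.
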